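(* Let $G$ consist of two parallel paths $P_1,P_2$ from $s$ to $d$ (of arbitrary lengths), let the inputs be constant, $f_s(t)=\bar f>0$ and $b_d(t)=\bar b>0$ for all $t$, and let $g\in\mathcal F$ be non-linear, i.e. $g(x)\neq x$ for some $x\in[0,1/2]$. Then there exist leakage parameters $(l_v)_v$ with $l_{P_1}<l_{P_2}$ (so $P_1$ is the unique minimum-leakage path), depending on $g$, $\bar f$ and $\bar b$, and an initial configuration (positive pheromone levels on all edges and nonnegative initial flows), such that under the dynamics governed by $g$, $\nu^f_{ss_1}(t)$ does not converge to $1$ as $t\to\infty$.
   Context: Model. Directed graph $G=(V,E)$ with source $s$, destination $d$; discrete time $t=0,1,\dots$; pheromone levels $p_{uv}(t)\ge0$ on edges, forward flows $f_v(t)\ge0$ and backward flows $b_v(t)\ge0$ at vertices; leakage parameters $l_v\in[0,1]$ and decay parameter $\delta\in(0,1)$. $f_s(t)$ and $b_d(t)$ are exogenous inputs. Flow update: for $v\ne s$, $f_v(t+1)=(1-l_v)\sum_{z:(z,v)\in E}f_{zv}(t)$; for $u\ne d$, $b_u(t+1)=(1-l_u)\sum_{z:(u,z)\in E}b_{uz}(t)$; pheromone update $p_{uv}(t+1)=\delta(p_{uv}(t)+f_{uv}(t)+b_{uv}(t))$. Normalized pheromone levels $\nu^f_{uv}(t)=p_{uv}(t)/\sum_{z:(u,z)\in E}p_{uz}(t)$, $\nu^b_{uv}(t)=p_{uv}(t)/\sum_{z:(z,v)\in E}p_{zv}(t)$. Path leakage $l_P=1-\prod_{v\in P\setminus\{s,d\}}(1-l_v)$.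 Two parallel paths: $G$ is the union of two directed paths $P_1,P_2$ from $s$ to $d$ sharing only $s$ and $d$; $s_1,s_2$ are the successors of $s$ and $d_1,d_2$ the predecessors of $d$ on $P_1,P_2$. Family $\mathcal F$: continuous, monotonically non-decreasing functions $g:[0,1/2]\to[0,1]$ with $g(0)=0$ and $g(1/2)=1/2$. The dynamics governed by $g$: at every vertex of out-degree (resp. in-degree) one, the entire forward (resp. backward) flow goes along the unique edge; at $s$, with $x=\min(\nu^f_{ss_1}(t),\nu^f_{ss_2}(t))$, the edge attaining the minimum receives forward flow $g(x)f_s(t)$ and the other edge receives $(1-g(x))f_s(t)$ (if $x=1/2$ each receives $f_s(t)/2$); at $d$ the backward flow $b_d(t)$ is split between $(d_1,d)$ and $(d_2,d)$ in the same way using $\nu^b_{d_1d}(t),\nu^b_{d_2d}(t)$. The linear decision rule corresponds to $g(x)=x$. *)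

From Stdlib Require Import Reals Arith.
Open Scope R_scope.

(* Graph: two parallel paths P1, P2 from s to d, sharing only s and d.
   Path i has [len i] interior vertices, numbered 1..len i
   (vertex 0 is s, vertex len i + 1 is d), and len i + 1 edges numbered
   0..len i, edge j going from vertex j to vertex j+1.
   Edge 0 of path i is (s, s_i); edge len i is (d_i, d). *)
Inductive path_id := P1 | P2.
Definition other (i : path_id) : path_id := match i with P1 => P2 | P2 => P1 end.

Definition in_family (g : R -> R) : Prop :=
  (forall x, 0 <= x <= 1/2 -> forall eps, 0 < eps ->
     exists delta, 0 < delta /\
       forall y, 0 <= y <= 1/2 -> Rabs (y - x) < delta -> Rabs (g y - g x) < eps) /\
  (forall x y, 0 <= x -> x <= y -> y <= 1/2 -> g x <= g y) /\
  (forall x, 0 <= x <= 1/2 -> 0 <= g x <= 1) /\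
  g 0 = 0 /\ g (1/2) = 1/2.

Definition nonlinear (g : R -> R) : Prop := exists x, 0 <= x <= 1/2 /\ g x <> x.

Definition split_share (g : R -> R) (nu_self nu_other : R) : R :=
  if Rlt_dec nu_self nu_other then g nu_self
  else if Rlt_dec nu_other nu_self then 1 - g nu_other
  else 1/2.

(* p i j t : pheromone on edge j of path i at time t. *)
Definition nu_f (p : path_id -> nat -> nat -> R) (t : nat) (i : path_id) : R :=
  p i 0%nat t / (p i 0%nat t + p (other i) 0%nat t).

Definition nu_b (len : path_id -> nat) (p : path_id -> nat -> nat -> R)
  (t : nat) (i : path_id) : R :=
  p i (len i) t / (p i (len i) t + p (other i) (len (other i)) t).

(* forward flow on edge j of path i at time t (f i j t = forward flow at
   interior vertex j); the edge out of s receives its g-share of fbar. *)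
Definition fedge (g : R -> R) (fbar : R) (p : path_id -> nat -> nat -> R)
  (f : path_id -> nat -> nat -> R) (i : path_id) (j t : nat) : R :=
  match j with
  | O => split_share g (nu_f p t i) (nu_f p t (other i)) * fbar
  | _ => f i j t
  end.

(* backward flow on edge j of path i at time t (b i j t = backward flow at
   interior vertex j); the edge into d receives its g-share of bbar. *)
Definition bedge (g : R -> R) (len : path_id -> nat) (bbar : R)
  (p : path_id -> nat -> nat -> R) (b : path_id -> nat -> nat -> R)
  (i : path_id) (j t : nat) : R :=
  if Nat.eqb j (len i)
  then split_share g (nu_b len p t i) (nu_b len p t (other i)) * bbar
  else b i (S j) t.

Definition is_trajectory (g : R -> R) (len : path_id -> nat)
  (l : path_id -> nat -> R) (delta fbar bbar : R)
  (p f b : path_id -> nat -> nat -> R) : Prop :=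
  forall t : nat,
    (forall i j, (j <= len i)%nat ->
       p i j (S t) = delta * (p i j t + fedge g fbar p f i j t
                                      + bedge g len bbar p b i j t)) /\
    (forall i j, (1 <= j <= len i)%nat ->
       f i j (S t) = (1 - l i j) * fedge g fbar p f i (j - 1) t) /\
    (forall i j, (1 <= j <= len i)%nat ->
       b i j (S t) = (1 - l i j) * bedge g len bbar p b i j t).

Fixpoint prod_keep (l : nat -> R) (n : nat) : R :=
  match n with
  | O => 1
  | S m => prod_keep l m * (1 - l (S m))
  end.

Definition path_leak (len : path_id -> nat) (l : path_id -> nat -> R) (i : path_id) : R :=
  1 - prod_keep (l i) (len i).

(* Since g is non-linear, there is x0 in [0, 1/2] with g x0 <> x0.  From x0 we
   extract a threshold al in (0,1) and a guaranteed share ga in (0,1] such that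
   (share_guarantee) whenever an edge's normalized pheromone is at least al, it
   receives at least the fraction ga of the incoming flow, the competing edge at
   most 1 - ga; moreover al * (1 - ga) < (1 - al) * ga.  Choose a keep factor
   K < 1 with al * (1 - ga) <= (1 - al) * ga * K, make P1 leak-free and let P2
   leak 1 - K at its first interior vertex, so l_P1 = 0 < 1 - K = l_P2.

   Starting with P2 favoured (normalized pheromone al on its edges at s and d),
   an invariant is preserved by the dynamics: P2 keeps normalized pheromone at
   least al at both s and d, flows on P1 stay below (1 - ga) times the inputs,
   and flows on P2 stay above ga * K times the inputs.  Hence nu^f_{ss1} stays
   at most 1 - al forever and cannot converge to 1. *)

From Stdlib Require Import Reals Arith Lra Lia Psatz.
Open Scope R_scope.

Definition share_guarantee (g : R -> R) (al ga : R) : Prop :=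
  forall u v, 0 <= u -> 0 <= v -> u + v = 1 -> al <= u ->
    ga <= split_share g u v <= 1 /\ 0 <= split_share g v u <= 1 - ga.

Lemma guarantee_above (g : R -> R) (x0 : R) :
  in_family g -> 0 <= x0 <= 1/2 -> x0 < g x0 -> share_guarantee g x0 (g x0).
Proof.
  intros (_ & Hmono & Hrange & _ & Hg12) Hx0 Hlt u v Hu Hv Huv Hxu.
  assert (Hc : g x0 <= 1/2) by (rewrite <- Hg12; apply Hmono; lra).
  unfold split_share.
  destruct (Rlt_dec u v); destruct (Rlt_dec v u); try lra.
  - assert (g x0 <= g u) by (apply Hmono; lra).
    assert (g u <= 1) by (apply Hrange; lra).
    lra.
  - assert (g v <= g (1/2)) by (apply Hmono; lra).
    assert (0 <= g v) by (apply Hrange; lra).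
    lra.
Qed.

Lemma guarantee_below (g : R -> R) (x0 : R) :
  in_family g -> 0 <= x0 <= 1/2 -> g x0 < x0 ->
  share_guarantee g (1 - x0) (1 - g x0).
Proof.
  intros (_ & Hmono & Hrange & _ & Hg12) Hx0 Hlt u v Hu Hv Huv Hxu.
  assert (Hhalf : x0 <> 1/2) by (intros ->; lra).
  unfold split_share.
  destruct (Rlt_dec u v); destruct (Rlt_dec v u); try lra.
  assert (g v <= g x0) by (apply Hmono; lra).
  assert (0 <= g v) by (apply Hrange; lra).
  lra.
Qed.

Lemma nonlinear_guarantee (g : R -> R) :
  in_family g -> nonlinear g ->
  exists al ga, 0 < al < 1 /\ 0 < ga <= 1 /\
    al * (1 - ga) < (1 - al) * ga /\ share_guarantee g al ga.
Proof.
  intros Hfam (x0 & Hx0 & Hneq).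
  pose proof Hfam as (_ & Hmono & Hrange & Hg0 & Hg12).
  assert (Hc0 : 0 <= g x0) by (apply Hrange; lra).
  assert (Hc12 : g x0 <= 1/2) by (rewrite <- Hg12; apply Hmono; lra).
  destruct (Rlt_dec x0 (g x0)) as [Hlt | Hge].
  - assert (x0 <> 0) by (intros ->; lra).
    exists x0, (g x0).
    split; [lra | split; [lra | split; [nra | now apply guarantee_above]]].
  - assert (Hlt : g x0 < x0) by lra.
    assert (x0 <> 1/2) by (intros ->; lra).
    exists (1 - x0), (1 - g x0).
    split; [lra | split; [lra | split; [nra | now apply guarantee_below]]].
Qed.

Lemma keep_factor_exists (al ga : R) :
  0 < al < 1 -> 0 < ga <= 1 -> al * (1 - ga) < (1 - al) * ga ->
  exists K, 0 < K < 1 /\ al * (1 - ga) <= (1 - al) * ga * K.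
Proof.
  intros Hal Hga Hstrict.
  set (A := al * (1 - ga)) in *.
  set (D := (1 - al) * ga) in *.
  assert (HA : 0 <= A) by (unfold A; nra).
  assert (HD : 0 < D) by (unfold D; nra).
  exists ((A + D) / (2 * D)).
  assert (E : D * ((A + D) / (2 * D)) = (A + D) / 2) by (field; lra).
  split; [split |].
  - apply Rdiv_lt_0_compat; lra.
  - apply (Rmult_lt_reg_l D); [lra |]. rewrite E. lra.
  - rewrite E. lra.
Qed.

Lemma normalized_lower (al a b : R) :
  0 < a -> 0 < b -> al * b <= (1 - al) * a -> al <= a / (a + b).
Proof.
  intros Ha Hb H.
  apply (Rmult_le_reg_r (a + b)); [lra |].
  unfold Rdiv; rewrite Rmult_assoc, Rinv_l by lra. nra.
Qed.

Lemma ratio_update (al delta p1 p2 X Y M c : R) :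
  0 < al < 1 -> 0 < delta ->
  al * p1 <= (1 - al) * p2 -> 0 <= X <= M -> c <= Y ->
  al * M <= (1 - al) * c ->
  al * (delta * (p1 + X)) <= (1 - al) * (delta * (p2 + Y)).
Proof.
  intros Hal Hd Hp HX HY HM.
  assert (al * X <= al * M) by (apply Rmult_le_compat_l; lra).
  assert ((1 - al) * c <= (1 - al) * Y) by (apply Rmult_le_compat_l; lra).
  replace (al * (delta * (p1 + X))) with (delta * (al * p1 + al * X)) by ring.
  replace ((1 - al) * (delta * (p2 + Y))) with
    (delta * ((1 - al) * p2 + (1 - al) * Y)) by ring.
  apply Rmult_le_compat_l; lra.
Qed.

Definition leak_config (K : R) (i : path_id) (j : nat) : R :=
  match i, j with
  | P2, 1%nat => 1 - K
  | _, _ => 0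
  end.

Lemma leak_config_range (K : R) (i : path_id) (j : nat) :
  0 < K < 1 -> 0 <= leak_config K i j <= 1.
Proof. intros HK. destruct i, j as [|[|j]]; simpl; lra. Qed.

Lemma prod_keep_P1 (K : R) (n : nat) : prod_keep (leak_config K P1) n = 1.
Proof. induction n as [|n IH]; simpl; [reflexivity |]. rewrite IH. ring. Qed.

Lemma prod_keep_P2 (K : R) (n : nat) :
  (1 <= n)%nat -> prod_keep (leak_config K P2) n = K.
Proof.
  induction n as [|[|n] IH]; intros Hn; [lia | simpl; ring |].
  change (prod_keep (leak_config K P2) (S (S n)))
    with (prod_keep (leak_config K P2) (S n) * (1 - 0)).
  rewrite IH by lia. ring.
Qed.

Lemma leak_config_P1_better (len : path_id -> nat) (K : R) :
  (1 <= len P2)%nat -> 0 < K < 1 ->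
  path_leak len (leak_config K) P1 < path_leak len (leak_config K) P2.
Proof.
  intros Hlen HK. unfold path_leak.
  rewrite prod_keep_P1, prod_keep_P2 by exact Hlen. lra.
Qed.

Lemma trajectory_exists (g : R -> R) (len : path_id -> nat)
  (l : path_id -> nat -> R) (delta fbar bbar : R) (P0 F0 B0 : path_id -> nat -> R) :
  exists p f b : path_id -> nat -> nat -> R,
    (forall i j, p i j 0%nat = P0 i j) /\ (forall i j, f i j 0%nat = F0 i j) /\
    (forall i j, b i j 0%nat = B0 i j) /\ is_trajectory g len l delta fbar bbar p f b.
Proof.
  set (state := ((path_id -> nat -> R) * (path_id -> nat -> R) * (path_id -> nat -> R))%type).
  set (step := fun s : state =>
    let p := fun i j (_ : nat) => fst (fst s) i j in
    let f := fun i j (_ : nat) => snd (fst s) i j in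
    let b := fun i j (_ : nat) => snd s i j in
    ((fun i j => delta * (p i j 0%nat + fedge g fbar p f i j 0 + bedge g len bbar p b i j 0)),
     (fun i j => (1 - l i j) * fedge g fbar p f i (j - 1) 0),
     (fun i j => (1 - l i j) * bedge g len bbar p b i j 0)) : state).
  set (traj := fix traj (t : nat) : state :=
    match t with O => (P0, F0, B0) | S t' => step (traj t') end).
  exists (fun i j t => fst (fst (traj t)) i j),
         (fun i j t => snd (fst (traj t)) i j),
         (fun i j t => snd (traj t) i j).
  split; [| split; [| split]]; [reflexivity .. |].
  intro t. repeat split; intros; reflexivity.
Qed.

Section Invariant.

Variables (g : R -> R) (len : path_id -> nat) (delta fbar bbar al ga K : R).
Hypothesis Hshare : share_guarantee g al ga.
Hypothesis Hlen : (1 <= len P2)%nat.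
Hypothesis Hd : 0 < delta.
Hypothesis Hf : 0 < fbar.
Hypothesis Hb : 0 < bbar.
Hypothesis Hal : 0 < al < 1.
Hypothesis Hga : 0 < ga <= 1.
Hypothesis HK : 0 < K < 1.
Hypothesis Hroom : al * (1 - ga) <= (1 - al) * ga * K.

Variables (p f b : path_id -> nat -> nat -> R).
Hypothesis Htraj : is_trajectory g len (leak_config K) delta fbar bbar p f b.

Record invariant (t : nat) : Prop := {
  inv_pos : forall i j, (j <= len i)%nat -> 0 < p i j t;
  inv_ratio_s : al * p P1 0%nat t <= (1 - al) * p P2 0%nat t;
  inv_ratio_d : al * p P1 (len P1) t <= (1 - al) * p P2 (len P2) t;
  inv_flow_P1 : forall j, (1 <= j <= len P1)%nat ->
    0 <= f P1 j t <= (1 - ga) * fbar /\ 0 <= b P1 j t <= (1 - ga) * bbar;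
  inv_fwd_P2 : forall j, (1 <= j <= len P2)%nat -> ga * K * fbar <= f P2 j t;
  inv_bwd_P2 : forall j, (1 <= j <= len P2)%nat -> ga * K * bbar <= b P2 j t;
  inv_bwd_P2_upstream : forall j, (2 <= j <= len P2)%nat -> ga * bbar <= b P2 j t
}.

Lemma keep_weaken (x : R) : 0 <= x -> ga * K * x <= ga * x.
Proof. intros Hx. assert (0 <= ga * x) by nra. nra. Qed.

Lemma guarantee_from_ratio (a c : R) :
  0 < a -> 0 < c -> al * c <= (1 - al) * a ->
  ga <= split_share g (a / (a + c)) (c / (c + a)) <= 1 /\
  0 <= split_share g (c / (c + a)) (a / (a + c)) <= 1 - ga.
Proof.
  intros Ha Hc H. apply Hshare.
  - left; apply Rdiv_pos_pos; lra.
  - left; apply Rdiv_pos_pos; lra.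
  - field; lra.
  - now apply normalized_lower.
Qed.

Lemma share_at_s (t : nat) : invariant t ->
  ga <= split_share g (nu_f p t P2) (nu_f p t P1) <= 1 /\
  0 <= split_share g (nu_f p t P1) (nu_f p t P2) <= 1 - ga.
Proof.
  intros HI. apply guarantee_from_ratio;
    [apply (inv_pos _ HI), Nat.le_0_l .. | apply (inv_ratio_s _ HI)].
Qed.

Lemma share_at_d (t : nat) : invariant t ->
  ga <= split_share g (nu_b len p t P2) (nu_b len p t P1) <= 1 /\
  0 <= split_share g (nu_b len p t P1) (nu_b len p t P2) <= 1 - ga.
Proof.
  intros HI. apply guarantee_from_ratio;
    [apply (inv_pos _ HI), Nat.le_refl .. | apply (inv_ratio_d _ HI)].
Qed.

Lemma P1_edge_flows (t : nat) : invariant t -> forall j, (j <= len P1)%nat ->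
  0 <= fedge g fbar p f P1 j t <= (1 - ga) * fbar /\
  0 <= bedge g len bbar p b P1 j t <= (1 - ga) * bbar.
Proof.
  intros HI j Hj. destruct (share_at_s t HI) as [_ Hss]. destruct (share_at_d t HI) as [_ Hsd].
  split.
  - destruct j as [|j]; simpl.
    + split; [apply Rmult_le_pos | apply Rmult_le_compat_r]; lra.
    + apply (inv_flow_P1 _ HI); lia.
  - unfold bedge. destruct (Nat.eqb_spec j (len P1)); simpl other.
    + split; [apply Rmult_le_pos | apply Rmult_le_compat_r]; lra.
    + apply (inv_flow_P1 _ HI); lia.
Qed.

Lemma P2_fedge_at_s (t : nat) : invariant t ->
  ga * fbar <= fedge g fbar p f P2 0 t.
Proof.
  intros HI. destruct (share_at_s t HI) as [Hs _]. simpl.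
  apply Rmult_le_compat_r; lra.
Qed.

Lemma P2_fedge_lower (t : nat) : invariant t -> forall j, (j <= len P2)%nat ->
  ga * K * fbar <= fedge g fbar p f P2 j t.
Proof.
  intros HI [|j] Hj.
  - pose proof (P2_fedge_at_s t HI). pose proof (keep_weaken fbar). lra.
  - apply (inv_fwd_P2 _ HI); lia.
Qed.

(* Backward flow on P2 upstream of the leaking vertex carries at least ga * bbar. *)
Lemma P2_bedge_upstream (t : nat) : invariant t -> forall j, (1 <= j <= len P2)%nat ->
  ga * bbar <= bedge g len bbar p b P2 j t.
Proof.
  intros HI j Hj. unfold bedge. destruct (Nat.eqb_spec j (len P2)); simpl other.
  - destruct (share_at_d t HI) as [Hs _]. apply Rmult_le_compat_r; lra.
  - apply (inv_bwd_P2_upstream _ HI); lia.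
Qed.

Lemma P2_bedge_lower (t : nat) : invariant t -> forall j, (j <= len P2)%nat ->
  ga * K * bbar <= bedge g len bbar p b P2 j t.
Proof.
  intros HI [|j] Hj.
  - unfold bedge. destruct (Nat.eqb_spec 0 (len P2)); [lia |].
    apply (inv_bwd_P2 _ HI); lia.
  - pose proof (P2_bedge_upstream t HI (S j) ltac:(lia)). pose proof (keep_weaken bbar). lra.
Qed.

Lemma ratio_step (t j1 j2 : nat) : invariant t ->
  (j1 <= len P1)%nat -> (j2 <= len P2)%nat ->
  al * p P1 j1 t <= (1 - al) * p P2 j2 t ->
  al * p P1 j1 (S t) <= (1 - al) * p P2 j2 (S t).
Proof.
  intros HI Hj1 Hj2 Hr. destruct (Htraj t) as [Tp _].
  rewrite (Tp P1 j1 Hj1), (Tp P2 j2 Hj2), !Rplus_assoc.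
  destruct (P1_edge_flows t HI j1 Hj1).
  pose proof (P2_fedge_lower t HI j2 Hj2). pose proof (P2_bedge_lower t HI j2 Hj2).
  apply ratio_update with (M := (1 - ga) * (fbar + bbar)) (c := ga * K * (fbar + bbar));
    try lra.
  replace (al * ((1 - ga) * (fbar + bbar))) with (al * (1 - ga) * (fbar + bbar)) by ring.
  replace ((1 - al) * (ga * K * (fbar + bbar))) with ((1 - al) * ga * K * (fbar + bbar))
    by ring.
  apply Rmult_le_compat_r; lra.
Qed.

(* Flows on P2 after one step: the leaking vertex 1 scales by K, others copy. *)
Lemma P2_flows_step (t : nat) : invariant t -> forall j, (1 <= j <= len P2)%nat ->
  ga * K * fbar <= f P2 j (S t) /\ ga * K * bbar <= b P2 j (S t) /\
  ((2 <= j)%nat -> ga * bbar <= b P2 j (S t)).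
Proof.
  intros HI j Hj. destruct (Htraj t) as [_ [Tf Tb]].
  rewrite (Tf P2 j Hj), (Tb P2 j Hj).
  pose proof (P2_bedge_upstream t HI j Hj) as Hup.
  destruct j as [|[|j]]; [lia | |]; simpl leak_config.
  - pose proof (P2_fedge_at_s t HI).
    replace (1 - (1 - K)) with K by ring. simpl Nat.sub.
    repeat split; [nra | nra | lia].
  - replace (1 - 0) with 1 by ring. rewrite !Rmult_1_l.
    pose proof (P2_fedge_lower t HI (S (S j) - 1) ltac:(lia)). pose proof (keep_weaken bbar).
    repeat split; lra.
Qed.

Lemma invariant_step (t : nat) : invariant t -> invariant (S t).
Proof.
  intros HI. destruct (Htraj t) as [Tp [Tf Tb]]. split.
  - intros i j Hj. rewrite Tp by exact Hj. apply Rmult_lt_0_compat; [exact Hd |].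
    pose proof (inv_pos _ HI i j Hj). destruct i.
    + destruct (P1_edge_flows t HI j Hj); lra.
    + pose proof (P2_fedge_lower t HI j Hj). pose proof (P2_bedge_lower t HI j Hj).
      assert (0 <= ga * K) by nra. nra.
  - apply ratio_step; [exact HI | lia | lia | apply (inv_ratio_s _ HI)].
  - apply ratio_step; [exact HI | lia | lia | apply (inv_ratio_d _ HI)].
  - intros j Hj. rewrite (Tf P1 j Hj), (Tb P1 j Hj). simpl leak_config.
    rewrite Rminus_0_r, !Rmult_1_l. destruct (P1_edge_flows t HI (j - 1) ltac:(lia)).
    split; [assumption | apply (P1_edge_flows t HI j); lia].
  - intros j Hj. apply (P2_flows_step t HI j Hj).
  - intros j Hj. apply (P2_flows_step t HI j Hj).
  - intros j Hj. apply (P2_flows_step t HI j); lia.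
Qed.

Lemma invariant_forever : invariant 0 -> forall t, invariant t.
Proof. intros H0 t. induction t; [exact H0 | now apply invariant_step]. Qed.

Lemma nu_f_P1_bounded (t : nat) : invariant t -> nu_f p t P1 <= 1 - al.
Proof.
  intros HI. unfold nu_f; simpl other.
  assert (A1 : 0 < p P1 0%nat t) by apply (inv_pos _ HI), Nat.le_0_l.
  assert (A2 : 0 < p P2 0%nat t) by apply (inv_pos _ HI), Nat.le_0_l.
  pose proof (normalized_lower al _ _ A2 A1 (inv_ratio_s _ HI)).
  assert (E : p P1 0%nat t / (p P1 0%nat t + p P2 0%nat t)
              = 1 - p P2 0%nat t / (p P2 0%nat t + p P1 0%nat t)) by (field; lra).
  lra.
Qed.

End Invariant.

Lemma nonconvergence_from_guarantee (g : R -> R) (len : path_id -> nat)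
  (delta fbar bbar al ga K : R) :
  share_guarantee g al ga -> (1 <= len P2)%nat ->
  0 < delta -> 0 < fbar -> 0 < bbar -> 0 < al < 1 -> 0 < ga <= 1 -> 0 < K < 1 ->
  al * (1 - ga) <= (1 - al) * ga * K ->
  exists l : path_id -> nat -> R,
    (forall i j, (1 <= j <= len i)%nat -> 0 <= l i j <= 1) /\
    path_leak len l P1 < path_leak len l P2 /\
    exists p f b : path_id -> nat -> nat -> R,
      (forall i j, (j <= len i)%nat -> 0 < p i j 0%nat) /\
      (forall i j, (1 <= j <= len i)%nat -> 0 <= f i j 0%nat /\ 0 <= b i j 0%nat) /\
      is_trajectory g len l delta fbar bbar p f b /\
      ~ Un_cv (fun t => nu_f p t P1) 1.
Proof.
  intros Hsh Hlen Hd Hf Hb Hal Hga HK Hroom.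
  exists (leak_config K).
  split; [intros; now apply leak_config_range |].
  split; [now apply leak_config_P1_better |].
  (* Initially P2 is favoured and flows sit at their bounds. *)
  destruct (trajectory_exists g len (leak_config K) delta fbar bbar
    (fun i _ => match i with P1 => 1 - al | P2 => al end)
    (fun i _ => match i with P1 => 0 | P2 => fbar end)
    (fun i _ => match i with P1 => 0 | P2 => bbar end))
    as (p & f & b & Hp0 & Hf0 & Hb0 & Htraj).
  assert (Hkeep : ga * K <= 1) by nra.
  assert (HI0 : invariant len fbar bbar al ga K p f b 0).
  { split; intros; rewrite ?Hp0, ?Hf0, ?Hb0; try destruct i; repeat split; nra. }
  exists p, f, b.
  split; [exact (inv_pos _ _ _ _ _ _ _ _ _ _ HI0) |].
  split; [intros i j _; rewrite Hf0, Hb0; destruct i; lra |].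
  split; [exact Htraj |].
  intros Hcv. destruct (Hcv al ltac:(lra)) as [N HN].
  specialize (HN N (Nat.le_refl N)).
  assert (Hbound : nu_f p N P1 <= 1 - al).
  { apply (nu_f_P1_bounded len fbar bbar al ga K p f b).
    apply (invariant_forever g len delta fbar bbar); assumption. }
  unfold Rdist in HN. rewrite Rabs_left1 in HN by lra. lra.
Qed.

Theorem proposition2 :
  forall (g : R -> R) (len : path_id -> nat) (delta fbar bbar : R),
    in_family g -> nonlinear g ->
    (1 <= len P2)%nat ->
    0 < delta < 1 -> 0 < fbar -> 0 < bbar ->
    exists l : path_id -> nat -> R,
      (forall i j, (1 <= j <= len i)%nat -> 0 <= l i j <= 1) /\
      path_leak len l P1 < path_leak len l P2 /\
      exists p f b : path_id -> nat -> nat -> R,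
        (forall i j, (j <= len i)%nat -> 0 < p i j 0%nat) /\
        (forall i j, (1 <= j <= len i)%nat -> 0 <= f i j 0%nat /\ 0 <= b i j 0%nat) /\
        is_trajectory g len l delta fbar bbar p f b /\
        ~ Un_cv (fun t => nu_f p t P1) 1.
Proof.
  intros g len delta fbar bbar Hfam Hnl Hlen Hd Hf Hb.
  destruct (nonlinear_guarantee g Hfam Hnl) as (al & ga & Hal & Hga & Hstrict & Hsh).
  destruct (keep_factor_exists al ga Hal Hga Hstrict) as (K & HK & Hroom).
  apply (nonconvergence_from_guarantee g len delta fbar bbar al ga K);
    solve [assumption | lra].
Qed.
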